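(* Let $m\ge 1$, let $f_1,\ldots,f_{m+1}$ be arithmetic functions, and let $\gamma_0,\gamma_1,\ldots,\gamma_m\in\mathbb{N}$ satisfy $\gamma_0=1$ and $\gamma_0\mid\gamma_1\mid\gamma_2\mid\cdots\mid\gamma_m$. Then for all $s\in\mathbb{C}$ with $\Re(s)>\max\{\sigma(f_1),\ldots,\sigma(f_{m+1})\}$, \[ L\bigl(s;f_{m+1}*_{\gamma_m}\cdots*_{\gamma_1}f_1\bigr)=\prod_{j=1}^{m+1}L\bigl(s;f_j^{[\gamma_{j-1}]}\bigr). \]
   Context: $\mathbb{N}=\{1,2,3,\ldots\}$. An arithmetic function is a map $f:\mathbb{N}\to\mathbb{C}$; by convention $f(x)=0$ whenever $x\notin\mathbb{N}$ (e.g. for non-integral rationals $x$). For $\gamma\in\mathbb{N}$, let $a_\gamma(n)=1$ if $n=d^\gamma$ for some $d\in\mathbb{N}$ and $a_\gamma(n)=0$ otherwise, and put $f^{[\gamma]}(n):=a_\gamma(n)f(n)$. For an arithmetic function $f$, $L(s;f):=\sum_{n\ge1}f(n)n^{-s}$ and $\sigma(f)\in\mathbb{R}\cup\{\pm\infty\}$ is the abscissa of absolute convergence of this series. For $\gamma_1,\ldots,\gamma_m\in\mathbb{N}$ and arithmetic functions $f_1,\ldots,f_{m+1}$, the $(\gamma_1,\ldots,\gamma_m)$-convolution is the arithmetic function \[ (f_{m+1}*_{\gamma_m}\cdots*_{\gamma_1}f_1)(n):=\sum_{\substack{(d_1,\ldots,d_m)\in\mathbb{N}^m\\ d_m^{\gamma_m}\mid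 d_{m-1}^{\gamma_{m-1}}\mid\cdots\mid d_1^{\gamma_1}\mid n}} f_1\Bigl(\frac{n}{d_1^{\gamma_1}}\Bigr)f_2\Bigl(\frac{d_1^{\gamma_1}}{d_2^{\gamma_2}}\Bigr)\cdots f_m\Bigl(\frac{d_{m-1}^{\gamma_{m-1}}}{d_m^{\gamma_m}}\Bigr)f_{m+1}\bigl(d_m^{\gamma_m}\bigr). \] *)

From Stdlib Require Import Reals Arith ClassicalEpsilon.
From Coquelicot Require Import Coquelicot.
Open Scope R_scope.

(* An arithmetic function N -> C; the value at 0 is irrelevant and never used. *)
Definition arith := nat -> C.

(* n^{-s} = exp(-s log n) for n >= 1 *)
Definition npow_neg (n : nat) (s : C) : C :=
  let r := exp (- Re s * ln (INR n)) in
  let t := Im s * ln (INR n) in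
  (r * cos t, - (r * sin t)).

(* The n-th term (n >= 1) of the Dirichlet series, reindexed from 0. *)
Definition Lterm (s : C) (f : arith) (k : nat) : C :=
  Cmult (f (S k)) (npow_neg (S k) s).

Definition Lval (s : C) (f : arith) : C :=
  (real (Lim_seq (fun N => Re (sum_n (Lterm s f) N))),
   real (Lim_seq (fun N => Im (sum_n (Lterm s f) N)))).

Definition sigma_abs (f : arith) : Rbar :=
  Glb_Rbar (fun x : R =>
    ex_series (fun k : nat => Cmod (f (S k)) * Rpower (INR (S k)) (- x))).

Definition restr (g : nat) (f : arith) : arith :=
  fun n => if excluded_middle_informative (exists d : nat, (1 <= d)%nat /\ n = (d ^ g)%nat)
           then f n else RtoC 0%R.

(* Nested convolution: with fuel r and current index j,
   G 0 j x = f_j(x),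
   G (r+1) j x = sum_{d >= 1, d^{gam j} | x} f_j(x / d^{gam j}) G r (j+1) (d^{gam j}).
   For x >= 1 and gam j >= 1, every such d satisfies d <= x. *)
Fixpoint convG (gam : nat -> nat) (f : nat -> arith) (r j x : nat) : C :=
  match r with
  | O => f j x
  | S r' =>
      sum_n (fun d : nat =>
        if excluded_middle_informative ((1 <= d)%nat /\ Nat.divide (d ^ gam j) x)
        then Cmult (f j (x / d ^ gam j)%nat) (convG gam f r' (S j) (d ^ gam j)%nat)
        else (0%R : C)) x
  end.

Definition gconv (m : nat) (gam : nat -> nat) (f : nat -> arith) : arith :=
  fun n => convG gam f m 1 n.

Fixpoint cprod1 (g : nat -> C) (k : nat) : C :=
  match k with
  | O => RtoC 1%R
  | S k' => Cmult (cprod1 g k') (g k)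
  end.

(** One step of the nested convolution becomes an ordinary Dirichlet convolution
    once restricted: [(f *_h H)^[g] = f^[g] * H^[h]] whenever [g | h]. Substituting
    [e = d^h] turns the [h]-convolution into an ordinary one against [H^[h]], and a
    multiple [n] of [d^h] is a [g]-th power iff [n / d^h] is. Since [n |-> n^-s] is
    completely multiplicative, the Dirichlet series of an ordinary convolution of two
    absolutely convergent series is their product: with [A], [B], [T] the partial
    sums of [|u|], [|v|] and [|u| * |v|], one has [T(N) <= A(N) B(N) <= T(N^2)], so
    [A B - T -> 0], and [A B - T] bounds the distance between the product of the
    partial sums of [u] and [v] and the partial sum of [u * v]. Induction from the
    innermost function outwards gives the formula; the outermost restriction is
    trivial as [gamma_0 = 1]. *)

From Stdlib Require Import Reals Arith Lia Lra ClassicalEpsilon FunctionalExtensionality.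
From Coquelicot Require Import Coquelicot.
From mathcomp Require ssrnat div.

Set Bullet Behavior "Strict Subproofs".
Open Scope R_scope.

(** * Perfect powers *)

Lemma Nat_divide_pow_cancel_r (x y g : nat) :
  (0 < g)%nat -> Nat.divide (x ^ g) (y ^ g) -> Nat.divide x y.
Proof.
  intros Hg [z Hz].
  assert (Hpow : forall a, (a ^ g)%nat = ssrnat.expn a g).
  { intros a. clear Hg Hz. induction g as [|g IH]; [reflexivity|].
    rewrite ssrnat.expnS, <- IH, <- ssrnat.multE. reflexivity. }
  assert (Hdvd : div.dvdn (ssrnat.expn x g) (ssrnat.expn y g) = true).
  { apply (Bool.reflect_iff _ _ div.dvdnP). exists z.
    now rewrite <- !Hpow, <- ssrnat.multE. }
  rewrite div.dvdn_pexp2r in Hdvd by (apply (Bool.reflect_iff _ _ ssrnat.leP); lia).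
  apply (Bool.reflect_iff _ _ div.dvdnP) in Hdvd as [k Hk].
  exists k. now rewrite ssrnat.multE.
Qed.

Definition is_power (g n : nat) : Prop := exists d : nat, (1 <= d)%nat /\ n = (d ^ g)%nat.

Lemma is_power_mul_pow (g h c q : nat) :
  (1 <= g)%nat -> Nat.divide g h -> (1 <= c)%nat ->
  is_power g (q * c ^ h) <-> is_power g q.
Proof.
  intros Hg [k ->] Hc.
  assert (Hck : (1 <= c ^ k)%nat)
    by (apply Nat.le_succ_l, Nat.neq_0_lt_0, Nat.pow_nonzero; lia).
  assert (Hckg : ((c ^ k) ^ g <> 0)%nat) by (apply Nat.pow_nonzero; lia).
  rewrite Nat.pow_mul_r. split.
  - intros [a [Ha Hqa]].
    destruct (Nat_divide_pow_cancel_r (c ^ k) a g) as [t ->]; [lia | exists q; lia |].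
    rewrite Nat.pow_mul_l in Hqa.
    exists t. split.
    + destruct t; [rewrite Nat.mul_0_l in Ha; lia | lia].
    + apply (Nat.mul_cancel_r _ _ ((c ^ k) ^ g)); lia.
  - intros [t [Ht ->]]. exists (t * c ^ k)%nat. split; [apply (Nat.mul_le_mono 1 _ 1); lia|].
    now rewrite Nat.pow_mul_l.
Qed.

Lemma is_power_div_pow (g h c n : nat) :
  (1 <= g)%nat -> Nat.divide g h -> (1 <= c)%nat -> (n mod c ^ h = 0)%nat ->
  is_power g (n / c ^ h) <-> is_power g n.
Proof.
  intros Hg Hgh Hc Hm. apply Nat.Div0.div_exact in Hm.
  rewrite Hm at 2. rewrite Nat.mul_comm. symmetry. now apply is_power_mul_pow.
Qed.

(** * Finite sums *)

Section FiniteSums.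
Context {G : AbelianMonoid}.

Lemma sum_n_zero (w : nat -> G) N :
  (forall n, (n <= N)%nat -> w n = zero) -> sum_n w N = zero.
Proof.
  intros Hw. rewrite (sum_n_ext_loc _ (fun _ => zero)) by exact Hw.
  apply sum_n_m_const_zero.
Qed.

Lemma sum_n_extend (w : nat -> G) M N :
  (M <= N)%nat -> (forall n, (M < n)%nat -> w n = zero) -> sum_n w N = sum_n w M.
Proof.
  intros HMN Hw. induction HMN as [|N HMN IH]; [reflexivity|].
  rewrite sum_Sn, IH, Hw by lia. apply plus_zero_r.
Qed.

Lemma sum_n_single (w : nat -> G) c N :
  (forall n, n <> c -> w n = zero) -> sum_n w N = if Nat.leb c N then w c else zero.
Proof.
  intros Hw. destruct (Nat.leb_spec c N) as [HcN|HNc].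
  - rewrite (sum_n_extend _ c N HcN) by (intros; apply Hw; lia).
    destruct c as [|c]; [apply sum_O|].
    rewrite sum_Sn, sum_n_zero by (intros; apply Hw; lia). apply plus_zero_l.
  - apply sum_n_zero. intros; apply Hw; lia.
Qed.

Lemma sum_n_fiber (phi : nat -> nat) (W : nat -> G) N :
  sum_n (fun e => sum_n (fun d => if Nat.eqb (phi d) e then W d else zero) N) N
  = sum_n (fun d => if Nat.leb (phi d) N then W d else zero) N.
Proof.
  rewrite sum_n_switch. apply sum_n_ext. intros d.
  rewrite (sum_n_single _ (phi d)), Nat.eqb_refl; [reflexivity|].
  intros e He. now rewrite (proj2 (Nat.eqb_neq _ _)) by congruence.
Qed.

Lemma sum_n_pow_fiber_power (W : nat -> G) (h c N : nat) :
  (1 <= h)%nat -> (1 <= c)%nat -> (c ^ h <= N)%nat ->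
  sum_n (fun d => if Nat.eqb (d ^ h) (c ^ h) then W d else zero) N = W c.
Proof.
  intros Hh Hc HcN. rewrite (sum_n_single _ c), Nat.eqb_refl.
  - rewrite (proj2 (Nat.leb_le c N)); [reflexivity|].
    enough (c ^ 1 <= c ^ h)%nat by (rewrite Nat.pow_1_r in *; lia).
    apply Nat.pow_le_mono_r; lia.
  - intros d Hd. rewrite (proj2 (Nat.eqb_neq _ _)); [reflexivity|].
    intros E. apply Hd, (Nat.pow_inj_l _ _ h); [lia | exact E].
Qed.

Lemma sum_n_pow_fiber_not_power (W : nat -> G) (h e N : nat) :
  W 0%nat = zero -> ~ is_power h e ->
  sum_n (fun d => if Nat.eqb (d ^ h) e then W d else zero) N = zero.
Proof.
  intros HW0 He. apply sum_n_zero. intros [|d] _.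
  - destruct (Nat.eqb (0 ^ h) e); [exact HW0 | reflexivity].
  - destruct (Nat.eqb_spec (S d ^ h) e) as [E|]; [|reflexivity].
    exfalso. apply He. exists (S d). split; [lia | now symmetry].
Qed.

Lemma sum_n_multiples (g : nat -> G) d N : (1 <= d)%nat ->
  sum_n (fun n => if Nat.eqb (n mod d) 0 then g (n / d)%nat else zero) N = sum_n g (N / d).
Proof.
  intros Hd.
  assert (Hquot : forall k n, (k * d)%nat = n -> k = (n / d)%nat)
    by (intros k n <-; symmetry; apply Nat.div_mul; lia).
  assert (HNd : (N / d <= N)%nat) by (apply Nat.Div0.div_le_upper_bound; nia).
  transitivity (sum_n (fun n => sum_n (fun k => if Nat.eqb (k * d) n then g k else zero) N) N).
  { apply sum_n_ext_loc. intros n Hn. symmetry.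
    rewrite (sum_n_single _ (n / d)).
    2: { intros k Hk. destruct (Nat.eqb_spec (k * d) n) as [E|_]; [|reflexivity].
         exfalso. exact (Hk (Hquot k n E)). }
    assert (Hnd : (n / d <= N)%nat) by (apply Nat.Div0.div_le_upper_bound; nia).
    rewrite (proj2 (Nat.leb_le _ _) Hnd), Nat.mul_comm.
    destruct (Nat.eqb_spec (n mod d) 0) as [Hm|Hm].
    - apply Nat.Div0.div_exact in Hm. rewrite <- Hm, Nat.eqb_refl. reflexivity.
    - rewrite (proj2 (Nat.eqb_neq _ _)); [reflexivity|].
      intros E. apply Hm, Nat.Div0.div_exact. congruence. }
  rewrite sum_n_fiber, (sum_n_extend _ (N / d) N HNd).
  - apply sum_n_ext_loc. intros k Hk.
    rewrite (proj2 (Nat.leb_le _ _)); [reflexivity|].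
    pose proof (Nat.Div0.mul_div_le N d). nia.
  - intros k Hk. rewrite (proj2 (Nat.leb_gt _ _)); [reflexivity|].
    destruct (Nat.le_gt_cases (k * d) N) as [Hle|]; [|lia].
    rewrite Nat.mul_comm in Hle. apply Nat.div_le_lower_bound in Hle; lia.
Qed.

End FiniteSums.

Lemma sum_n_minus {G : AbelianGroup} (u w : nat -> G) N :
  sum_n (fun n => minus (u n) (w n)) N = minus (sum_n u N) (sum_n w N).
Proof.
  induction N as [|N IH]; [now rewrite !sum_O|].
  rewrite !sum_Sn, IH. unfold minus. rewrite opp_plus, <- !plus_assoc. f_equal.
  rewrite plus_comm, <- plus_assoc. f_equal. apply plus_comm.
Qed.

Lemma sum_n_nonneg_le (a : nat -> R) M N :
  (forall n, 0 <= a n) -> (M <= N)%nat -> sum_n a M <= sum_n a N.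
Proof.
  intros Ha HMN. induction HMN as [|N HMN IH]; [apply Rle_refl|].
  rewrite sum_Sn. specialize (Ha (S N)). change (plus ?x ?y) with (x + y). lra.
Qed.

Lemma sum_n_nonneg (a : nat -> R) N : (forall n, 0 <= a n) -> 0 <= sum_n a N.
Proof. intros Ha. rewrite sum_n_Reals. now apply cond_pos_sum. Qed.

Lemma sum_n_le_loc (a b : nat -> R) N :
  (forall n, (n <= N)%nat -> a n <= b n) -> sum_n a N <= sum_n b N.
Proof. intros Hab. rewrite !sum_n_Reals. now apply sum_Rle. Qed.

Lemma sum_n_Rmult_l (c : R) (a : nat -> R) N : sum_n (fun n => c * a n) N = c * sum_n a N.
Proof. exact (sum_n_mult_l c a N). Qed.

(** * Dirichlet convolution *)

Section DirichletConvolution.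
Context {K : Ring}.

Definition dconv (u v : nat -> K) (n : nat) : K :=
  sum_n (fun d => if andb (Nat.leb 1 d) (Nat.eqb (n mod d) 0)
                  then mult (u (n / d)%nat) (v d) else zero) n.

Lemma sum_n_dconv (u v : nat -> K) N : u 0%nat = zero -> v 0%nat = zero ->
  sum_n (dconv u v) N = sum_n (fun d => mult (sum_n u (N / d)) (v d)) N.
Proof.
  intros Hu0 Hv0. unfold dconv.
  rewrite (sum_n_ext_loc _ (fun n => sum_n (fun d =>
             if andb (Nat.leb 1 d) (Nat.eqb (n mod d) 0)
             then mult (u (n / d)%nat) (v d) else zero) N)).
  2: { intros n Hn. symmetry. apply sum_n_extend; [exact Hn|].
       intros d Hd. destruct n as [|n].
       - rewrite Nat.Div0.div_0_l, Hu0, mult_zero_l. now destruct (_ && _)%bool.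
       - rewrite Nat.mod_small by lia. now rewrite Bool.andb_false_r. }
  rewrite sum_n_switch. apply sum_n_ext. intros [|d].
  - rewrite Hv0, mult_zero_r. apply sum_n_zero. reflexivity.
  - rewrite <- sum_n_mult_r, <- (sum_n_multiples _ (S d)) by lia. reflexivity.
Qed.

Lemma mult_sub_sum_n_dconv (u v : nat -> K) N : u 0%nat = zero -> v 0%nat = zero ->
  minus (mult (sum_n u N) (sum_n v N)) (sum_n (dconv u v) N)
  = sum_n (fun d => mult (minus (sum_n u N) (sum_n u (N / d))) (v d)) N.
Proof.
  intros Hu0 Hv0. rewrite sum_n_dconv, <- sum_n_mult_l by assumption.
  rewrite <- (sum_n_minus (G := Ring.AbelianGroup K)). apply sum_n_ext. intros d.
  unfold minus. rewrite opp_mult_l. symmetry. apply mult_distr_r.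
Qed.

End DirichletConvolution.

Section NonnegDirichletProduct.
Variables a b : nat -> R.
Hypothesis Ha : forall n, 0 <= a n.
Hypothesis Hb : forall n, 0 <= b n.
Hypothesis Ha0 : a 0%nat = 0.
Hypothesis Hb0 : b 0%nat = 0.

Lemma dconv_nonneg n : 0 <= dconv a b n.
Proof.
  unfold dconv. apply sum_n_nonneg. intros d.
  destruct (_ && _)%bool; [apply Rmult_le_pos; auto | apply Rle_refl].
Qed.

Lemma sum_n_dconv_le_mult N : sum_n (dconv a b) N <= sum_n a N * sum_n b N.
Proof.
  rewrite sum_n_dconv, <- sum_n_Rmult_l by assumption.
  apply sum_n_le_loc. intros d _. apply Rmult_le_compat_r; [apply Hb|].
  apply sum_n_nonneg_le; [exact Ha|]. destruct d as [|d]; [simpl; lia|].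
  apply Nat.Div0.div_le_upper_bound. nia.
Qed.

Lemma mult_le_sum_n_dconv N : sum_n a N * sum_n b N <= sum_n (dconv a b) (N * N).
Proof.
  rewrite sum_n_dconv, <- sum_n_Rmult_l by assumption.
  apply (Rle_trans _ (sum_n (fun d => sum_n a (N * N / d)%nat * b d) N)).
  - apply sum_n_le_loc. intros [|d] Hd; [rewrite Hb0; lra|].
    apply Rmult_le_compat_r; [apply Hb|]. apply sum_n_nonneg_le; [exact Ha|].
    apply Nat.div_le_lower_bound; nia.
  - apply sum_n_nonneg_le; [|nia].
    intros d. apply Rmult_le_pos; [apply sum_n_nonneg, Ha | apply Hb].
Qed.

Lemma is_lim_seq_sum_n_dconv (A B : R) :
  is_lim_seq (sum_n a) A -> is_lim_seq (sum_n b) B ->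
  is_lim_seq (sum_n (dconv a b)) (A * B).
Proof.
  intros HA HB.
  assert (HaA : forall N, sum_n a N <= A)
    by (apply is_lim_seq_incr_compare; [exact HA | intros; apply sum_n_nonneg_le; auto]).
  assert (HbB : forall N, sum_n b N <= B)
    by (apply is_lim_seq_incr_compare; [exact HB | intros; apply sum_n_nonneg_le; auto]).
  assert (Hincr : forall N, sum_n (dconv a b) N <= sum_n (dconv a b) (S N))
    by (intros; apply sum_n_nonneg_le; [apply dconv_nonneg | lia]).
  assert (Hbound : forall N, sum_n (dconv a b) N <= A * B).
  { intros N. eapply Rle_trans; [apply sum_n_dconv_le_mult|].
    apply Rmult_le_compat; auto; now apply sum_n_nonneg. }
  destruct (ex_finite_lim_seq_incr _ _ Hincr Hbound) as [L HL].
  replace (A * B) with L; [exact HL|]. apply Rle_antisym.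
  - apply (is_lim_seq_le _ _ _ _ Hbound HL (is_lim_seq_const _)).
  - assert (HmultL : forall N, sum_n a N * sum_n b N <= L)
      by (intros N; eapply Rle_trans; [apply mult_le_sum_n_dconv|];
          now apply is_lim_seq_incr_compare).
    apply (is_lim_seq_le _ _ _ _ HmultL (is_lim_seq_mult' _ _ _ _ HA HB) (is_lim_seq_const _)).
Qed.

End NonnegDirichletProduct.

(** * Absolutely convergent complex series *)

Definition abs_summable (u : nat -> C) : Prop := ex_series (fun n => Cmod (u n)).

Definition is_C_lim_seq (z : nat -> C) (l : C) : Prop :=
  is_lim_seq (fun N => Re (z N)) (Re l) /\ is_lim_seq (fun N => Im (z N)) (Im l).

Lemma im_le_Cmod (c : C) : Rabs (Im c) <= Cmod c.
Proof. eapply Rle_trans; [|apply Rmax_Cmod]. apply Rmax_r. Qed.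

Lemma Re_sum_n (u : nat -> C) N : Re (sum_n u N) = sum_n (fun n => Re (u n)) N.
Proof. induction N as [|N IH]; [reflexivity|]. now rewrite !sum_Sn, <- IH. Qed.

Lemma Im_sum_n (u : nat -> C) N : Im (sum_n u N) = sum_n (fun n => Im (u n)) N.
Proof. induction N as [|N IH]; [reflexivity|]. now rewrite !sum_Sn, <- IH. Qed.

Lemma abs_summable_ex_lim (u : nat -> C) :
  abs_summable u -> exists l, is_C_lim_seq (sum_n u) l.
Proof.
  intros Hu.
  destruct (ex_series_le (K := R_AbsRing) (fun n => Re (u n)) _ (fun n => re_le_Cmod (u n)) Hu)
    as [lr Hr].
  destruct (ex_series_le (K := R_AbsRing) (fun n => Im (u n)) _ (fun n => im_le_Cmod (u n)) Hu)
    as [li Hi].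
  exists (lr, li). split.
  - eapply is_lim_seq_ext; [intros N; symmetry; apply Re_sum_n | exact Hr].
  - eapply is_lim_seq_ext; [intros N; symmetry; apply Im_sum_n | exact Hi].
Qed.

Lemma is_C_lim_seq_mult (z w : nat -> C) (l k : C) :
  is_C_lim_seq z l -> is_C_lim_seq w k ->
  is_C_lim_seq (fun N => Cmult (z N) (w N)) (Cmult l k).
Proof.
  intros [Hzr Hzi] [Hwr Hwi]. split; simpl.
  - apply is_lim_seq_minus'; apply is_lim_seq_mult'; assumption.
  - apply is_lim_seq_plus'; apply is_lim_seq_mult'; assumption.
Qed.

Lemma is_C_lim_seq_close (z w : nat -> C) (l : C) (D : nat -> R) :
  is_C_lim_seq z l -> (forall N, Cmod (Cminus (z N) (w N)) <= D N) -> is_lim_seq D 0 ->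
  is_C_lim_seq w l.
Proof.
  intros [Hr Hi] HD HD0.
  assert (Hsmall : forall p : C -> R, (forall c, Rabs (p c) <= Cmod c) ->
            is_lim_seq (fun N => p (Cminus (z N) (w N))) 0).
  { intros p Hp. apply is_lim_seq_abs_0.
    apply (is_lim_seq_le_le (fun _ => 0) _ D); [|apply is_lim_seq_const|exact HD0].
    intros N. split; [apply Rabs_pos|]. eapply Rle_trans; [apply Hp|apply HD]. }
  split.
  - replace (Re l) with (Re l - 0) by ring.
    eapply is_lim_seq_ext; [|apply is_lim_seq_minus'; [exact Hr|exact (Hsmall _ re_le_Cmod)]].
    intros N. change (Re (z N) - (Re (z N) - Re (w N)) = Re (w N)). ring.
  - replace (Im l) with (Im l - 0) by ring.
    eapply is_lim_seq_ext; [|apply is_lim_seq_minus'; [exact Hi|exact (Hsmall _ im_le_Cmod)]].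
    intros N. change (Im (z N) - (Im (z N) - Im (w N)) = Im (w N)). ring.
Qed.

Lemma Cmod_sum_n_sub_le (u : nat -> C) M N : (M <= N)%nat ->
  Cmod (Cminus (sum_n u N) (sum_n u M))
  <= sum_n (fun n => Cmod (u n)) N - sum_n (fun n => Cmod (u n)) M.
Proof.
  intros HMN.
  eapply Rle_trans; [apply Req_le, f_equal; symmetry; apply (sum_n_m_sum_n u M N HMN)|].
  eapply Rle_trans; [apply (norm_sum_n_m (V := C_NormedModule))|].
  apply Req_le. apply (sum_n_m_sum_n (G := R_AbelianGroup)). exact HMN.
Qed.

Lemma Cmod_dconv_le (u v : nat -> C) n :
  Cmod (dconv u v n) <= dconv (fun k => Cmod (u k)) (fun k => Cmod (v k)) n.
Proof.
  unfold dconv. eapply Rle_trans; [apply (norm_sum_n_m (V := C_NormedModule))|].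
  apply sum_n_m_le. intros d. destruct (_ && _)%bool.
  - change (Cmod (Cmult (u (n / d)%nat) (v d)) <= Cmod (u (n / d)%nat) * Cmod (v d)).
    rewrite Cmod_mult. apply Rle_refl.
  - change (Cmod 0 <= 0). rewrite Cmod_0. apply Rle_refl.
Qed.

Lemma Cmod_mult_sub_sum_n_dconv (u v : nat -> C) N : u 0%nat = zero -> v 0%nat = zero ->
  Cmod (Cminus (Cmult (sum_n u N) (sum_n v N)) (sum_n (dconv u v) N))
  <= sum_n (fun n => Cmod (u n)) N * sum_n (fun n => Cmod (v n)) N
     - sum_n (dconv (fun n => Cmod (u n)) (fun n => Cmod (v n))) N.
Proof.
  intros Hu0 Hv0.
  assert (Hau0 : Cmod (u 0%nat) = 0) by (rewrite Hu0; apply Cmod_0).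
  assert (Hbv0 : Cmod (v 0%nat) = 0) by (rewrite Hv0; apply Cmod_0).
  eapply Rle_trans; [apply Req_le, f_equal, (mult_sub_sum_n_dconv u v N Hu0 Hv0)|].
  eapply Rle_trans;
    [|apply Req_le; symmetry; apply (mult_sub_sum_n_dconv (K := R_Ring)); assumption].
  eapply Rle_trans; [apply (norm_sum_n_m (V := C_NormedModule))|].
  apply sum_n_m_le. intros d.
  change (Cmod (Cmult (Cminus (sum_n u N) (sum_n u (N / d))) (v d))
          <= (sum_n (fun n => Cmod (u n)) N - sum_n (fun n => Cmod (u n)) (N / d)) * Cmod (v d)).
  rewrite Cmod_mult. apply Rmult_le_compat_r; [apply Cmod_ge_0|].
  apply Cmod_sum_n_sub_le. destruct d as [|d]; [simpl; lia|].
  apply Nat.Div0.div_le_upper_bound. nia.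
Qed.

Theorem dconv_abs_summable_lim (u v : nat -> C) (U V : C) :
  u 0%nat = zero -> v 0%nat = zero -> abs_summable u -> abs_summable v ->
  is_C_lim_seq (sum_n u) U -> is_C_lim_seq (sum_n v) V ->
  abs_summable (dconv u v) /\ is_C_lim_seq (sum_n (dconv u v)) (Cmult U V).
Proof.
  intros Hu0 Hv0 [A HA] [B HB] HU HV.
  set (a n := Cmod (u n)). set (b n := Cmod (v n)).
  assert (HT : is_lim_seq (sum_n (dconv a b)) (A * B)).
  { apply is_lim_seq_sum_n_dconv; try (intros; apply Cmod_ge_0); try assumption;
      unfold a, b; [rewrite Hu0 | rewrite Hv0]; apply Cmod_0. }
  split.
  - apply (ex_series_le (V := R_CompleteNormedModule) _ (dconv a b)).
    + intros n. change (Rabs (Cmod (dconv u v n)) <= dconv a b n).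
      rewrite Rabs_pos_eq by apply Cmod_ge_0. apply Cmod_dconv_le.
    + exists (A * B). exact HT.
  - eapply (is_C_lim_seq_close _ _ _ _ (is_C_lim_seq_mult _ _ _ _ HU HV)).
    + intros N. apply Cmod_mult_sub_sum_n_dconv; assumption.
    + replace 0 with (A * B - A * B) by ring.
      apply is_lim_seq_minus'; [apply is_lim_seq_mult'|]; assumption.
Qed.

(** * Dirichlet series *)

(* The [n]-th term, indexed by [n] itself: [dterm s F 0 = 0] and
   [dterm s F (S k) = Lterm s F k]. *)
Definition dterm (s : C) (F : arith) (n : nat) : C :=
  match n with O => RtoC 0 | _ => Cmult (F n) (npow_neg n s) end.

Lemma dterm_pos (s : C) (F : arith) n : n <> 0%nat -> dterm s F n = Cmult (F n) (npow_neg n s).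
Proof. destruct n; [lia | reflexivity]. Qed.

Lemma npow_neg_mult (p q : nat) (s : C) : (1 <= p)%nat -> (1 <= q)%nat ->
  npow_neg (p * q) s = Cmult (npow_neg p s) (npow_neg q s).
Proof.
  intros Hp Hq. unfold npow_neg.
  rewrite mult_INR, ln_mult by (apply lt_0_INR; lia).
  set (lp := ln (INR p)). set (lq := ln (INR q)).
  replace (- Re s * (lp + lq)) with (- Re s * lp + - Re s * lq) by ring.
  replace (Im s * (lp + lq)) with (Im s * lp + Im s * lq) by ring.
  rewrite exp_plus, cos_plus, sin_plus. unfold Cmult; simpl. f_equal; ring.
Qed.

Lemma Cmod_npow_neg (n : nat) (s : C) : Cmod (npow_neg n s) = Rpower (INR n) (- Re s).
Proof.
  unfold npow_neg, Rpower, Cmod. simpl.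
  set (r := exp (- Re s * ln (INR n))). set (t := Im s * ln (INR n)).
  assert (Hr : 0 < r) by apply exp_pos.
  replace (r * cos t * (r * cos t * 1) + - (r * sin t) * (- (r * sin t) * 1))
    with (r * r * (Rsqr (sin t) + Rsqr (cos t))) by (unfold Rsqr; ring).
  rewrite sin2_cos2, Rmult_1_r, sqrt_square; lra.
Qed.

Lemma dterm_dconv (s : C) (u v : arith) : dterm s (dconv u v) = dconv (dterm s u) (dterm s v).
Proof.
  apply functional_extensionality. intros [|n]; [unfold dconv; now rewrite sum_O|].
  unfold dterm at 1. unfold dconv.
  change (Cmult (sum_n ?w (S n)) ?z) with (mult (sum_n w (S n)) z).
  rewrite <- sum_n_mult_r. apply sum_n_ext. intros d.
  destruct (Nat.leb_spec 1 d) as [Hd|]; [|apply mult_zero_l].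
  destruct (Nat.eqb_spec (S n mod d) 0) as [Hm|]; [|apply mult_zero_l].
  apply Nat.Div0.div_exact in Hm.
  assert (Hq : (S n / d <> 0)%nat) by (intros Hq; rewrite Hq in Hm; lia).
  simpl andb. rewrite !dterm_pos by lia.
  change (Cmult (Cmult (u (S n / d)%nat) (v d)) (npow_neg (S n) s)
          = Cmult (Cmult (u (S n / d)%nat) (npow_neg (S n / d) s))
                  (Cmult (v d) (npow_neg d s))).
  rewrite Hm at 2. rewrite Nat.mul_comm, npow_neg_mult by lia. ring.
Qed.

Lemma abs_summable_dterm (s : C) (F : arith) :
  Rbar_lt (sigma_abs F) (Finite (Re s)) -> abs_summable (dterm s F).
Proof.
  intros Hlt. unfold sigma_abs in Hlt.
  set (E := fun x : R => ex_series (fun k => Cmod (F (S k)) * Rpower (INR (S k)) (- x))) in Hlt.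
  assert (HE : exists x, E x /\ x <= Re s).
  { apply NNPP. intros Hno.
    assert (Hlb : is_lb_Rbar E (Finite (Re s))).
    { intros x Ex. simpl. apply Rnot_lt_le. intros Hx.
      apply Hno. exists x. split; [exact Ex | lra]. }
    exact (Rbar_lt_not_le _ _ Hlt (proj2 (Glb_Rbar_correct E) _ Hlb)). }
  destruct HE as [x [Ex Hxs]].
  apply ex_series_incr_1.
  eapply (ex_series_le (V := R_CompleteNormedModule)); [|exact Ex]. intros k.
  change (Rabs (Cmod (dterm s F (S k))) <= Cmod (F (S k)) * Rpower (INR (S k)) (- x)).
  rewrite Rabs_pos_eq by apply Cmod_ge_0.
  rewrite dterm_pos, Cmod_mult, Cmod_npow_neg by lia.
  apply Rmult_le_compat_l; [apply Cmod_ge_0|].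
  apply Rle_Rpower; [|lra]. rewrite S_INR. pose proof (pos_INR k). lra.
Qed.

Lemma restr_is_power (g : nat) (F : arith) n : is_power g n -> restr g F n = F n.
Proof.
  intros Hn. unfold restr.
  destruct (excluded_middle_informative _) as [_|Hno]; [reflexivity | contradiction].
Qed.

Lemma restr_not_is_power (g : nat) (F : arith) n : ~ is_power g n -> restr g F n = zero.
Proof.
  intros Hn. unfold restr.
  destruct (excluded_middle_informative _) as [Hyes|_]; [contradiction | reflexivity].
Qed.

Lemma abs_summable_dterm_restr (s : C) (g : nat) (F : arith) :
  abs_summable (dterm s F) -> abs_summable (dterm s (restr g F)).
Proof.
  apply (ex_series_le (V := R_CompleteNormedModule)). intros [|n].
  - change (Rabs (Cmod 0) <= Cmod 0). rewrite Cmod_0, Rabs_R0. apply Rle_refl.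
  - change (Rabs (Cmod (dterm s (restr g F) (S n))) <= Cmod (dterm s F (S n))).
    rewrite Rabs_pos_eq by apply Cmod_ge_0. rewrite !dterm_pos, !Cmod_mult by lia.
    apply Rmult_le_compat_r; [apply Cmod_ge_0|].
    destruct (classic (is_power g (S n))) as [Hp|Hp].
    + rewrite restr_is_power by exact Hp. apply Rle_refl.
    + rewrite restr_not_is_power by exact Hp.
      rewrite (Cmod_0 : Cmod zero = 0). apply Cmod_ge_0.
Qed.

Lemma dterm_restr_1 (s : C) (F : arith) : dterm s (restr 1 F) = dterm s F.
Proof.
  apply functional_extensionality. intros [|n]; [reflexivity|].
  assert (Hp : is_power 1 (S n)) by (exists (S n); split; [lia | now rewrite Nat.pow_1_r]).
  now rewrite !dterm_pos, restr_is_power by first [exact Hp | lia].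
Qed.

Lemma sum_n_Lterm (s : C) (F : arith) N : sum_n (Lterm s F) N = sum_n (dterm s F) (S N).
Proof.
  induction N as [|N IH].
  - rewrite sum_Sn, !sum_O. change (Lterm s F 0 = Cplus (RtoC 0) (dterm s F 1)).
    unfold Lterm. simpl. ring.
  - rewrite sum_Sn, IH, (sum_Sn _ (S N)). reflexivity.
Qed.

Lemma Lval_of_lim (s : C) (F : arith) (l : C) :
  is_C_lim_seq (sum_n (dterm s F)) l -> Lval s F = l.
Proof.
  intros [Hr Hi]. apply is_lim_seq_incr_1 in Hr, Hi. unfold Lval.
  rewrite (is_lim_seq_unique _ (Re l)), (is_lim_seq_unique _ (Im l)).
  - now destruct l.
  - eapply is_lim_seq_ext; [|exact Hi]. intros N. now rewrite sum_n_Lterm.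
  - eapply is_lim_seq_ext; [|exact Hr]. intros N. now rewrite sum_n_Lterm.
Qed.

Lemma dirichlet_series_restr (s : C) (g : nat) (F : arith) :
  Rbar_lt (sigma_abs F) (Finite (Re s)) ->
  abs_summable (dterm s (restr g F)) /\
  is_C_lim_seq (sum_n (dterm s (restr g F))) (Lval s (restr g F)).
Proof.
  intros Hsig.
  assert (Habs : abs_summable (dterm s (restr g F)))
    by (apply abs_summable_dterm_restr, abs_summable_dterm, Hsig).
  split; [exact Habs|].
  destruct (abs_summable_ex_lim _ Habs) as [l Hl]. now rewrite (Lval_of_lim _ _ _ Hl).
Qed.

(** * The nested convolution *)

Lemma restr_dconv_restr (g h : nat) (u w : arith) : (1 <= g)%nat -> Nat.divide g h ->
  restr g (dconv u (restr h w)) = dconv (restr g u) (restr h w).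
Proof.
  intros Hg Hgh. apply functional_extensionality. intros n.
  assert (Hquot : forall d, is_power h d -> (n mod d = 0)%nat ->
            is_power g (n / d) <-> is_power g n)
    by (intros d [c [Hc ->]] Hm; now apply is_power_div_pow).
  unfold dconv. destruct (classic (is_power g n)) as [Hn|Hn].
  - rewrite restr_is_power by exact Hn. apply sum_n_ext. intros d.
    destruct (_ && _)%bool eqn:Hcond; [|reflexivity].
    apply andb_prop in Hcond as [_ Hm]. apply Nat.eqb_eq in Hm.
    destruct (classic (is_power h d)) as [Hd|Hd].
    + now rewrite (restr_is_power g u) by (apply Hquot; assumption).
    + now rewrite (restr_not_is_power h w d Hd), !(mult_zero_r (K := C_Ring)).
  - rewrite restr_not_is_power by exact Hn. symmetry. apply sum_n_zero. intros d _.
    destruct (_ && _)%bool eqn:Hcond; [|reflexivity].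
    apply andb_prop in Hcond as [_ Hm]. apply Nat.eqb_eq in Hm.
    destruct (classic (is_power h d)) as [Hd|Hd].
    + rewrite (restr_not_is_power g u) by (rewrite Hquot; assumption).
      apply (mult_zero_l (K := C_Ring)).
    + rewrite (restr_not_is_power h w d Hd). apply (mult_zero_r (K := C_Ring)).
Qed.

Lemma convG_S (gam : nat -> nat) (f : nat -> arith) (r j : nat) : (1 <= gam j)%nat ->
  convG gam f (S r) j = dconv (f j) (restr (gam j) (convG gam f r (S j))).
Proof.
  intros Hh. apply functional_extensionality. intros n.
  set (h := gam j) in *. set (H := convG gam f r (S j)).
  set (W := fun d => if excluded_middle_informative ((1 <= d)%nat /\ Nat.divide (d ^ h) n)
                     then Cmult (f j (n / d ^ h)%nat) (H (d ^ h)%nat) else RtoC 0).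
  change (convG gam f (S r) j n) with (sum_n W n).
  transitivity (sum_n (fun d => if Nat.leb (d ^ h) n then W d else zero) n).
  { apply sum_n_ext_loc. intros d Hd. destruct (Nat.leb_spec (d ^ h) n); [reflexivity|].
    unfold W. destruct (excluded_middle_informative _) as [[Hd1 Hdiv]|]; [|reflexivity].
    apply Nat.divide_pos_le in Hdiv; lia. }
  (* Substitute [e = d ^ h]; the fibre over [e] is a single [c] when [e = c ^ h]. *)
  rewrite <- (sum_n_fiber (fun d => (d ^ h)%nat) W n). cbv beta.
  unfold dconv. apply sum_n_ext_loc. intros e He. symmetry.
  destruct (classic (is_power h e)) as [[c [Hc ->]]|He'].
  - assert (Hpow : is_power h (c ^ h)) by (exists c; auto).
    rewrite sum_n_pow_fiber_power, restr_is_power by assumption.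
    assert (Hc1 : (1 <=? c ^ h)%nat = true).
    { apply Nat.leb_le, Nat.le_succ_l, Nat.neq_0_lt_0, Nat.pow_nonzero. lia. }
    rewrite Hc1. unfold W.
    destruct (excluded_middle_informative _) as [[_ Hdiv]|Hno].
    + apply Nat.Lcm0.mod_divide, Nat.eqb_eq in Hdiv. rewrite Hdiv. reflexivity.
    + destruct (Nat.eqb_spec (n mod c ^ h) 0) as [Hm|]; [|reflexivity].
      exfalso. apply Hno. split; [exact Hc | now apply Nat.Lcm0.mod_divide].
  - assert (HW0 : W 0%nat = zero)
      by (unfold W; destruct (excluded_middle_informative _) as [[H0 _]|]; [lia | reflexivity]).
    rewrite sum_n_pow_fiber_not_power, restr_not_is_power by assumption.
    destruct (_ && _)%bool; [apply (mult_zero_r (K := C_Ring)) | reflexivity].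
Qed.

Lemma dterm_restr_convG_S (s : C) (gam : nat -> nat) (f : nat -> arith) (g r j : nat) :
  (1 <= g)%nat -> (1 <= gam j)%nat -> Nat.divide g (gam j) ->
  dterm s (restr g (convG gam f (S r) j))
  = dconv (dterm s (restr g (f j))) (dterm s (restr (gam j) (convG gam f r (S j)))).
Proof.
  intros Hg Hgam Hdiv. now rewrite convG_S, restr_dconv_restr, dterm_dconv.
Qed.

Lemma cprod1_S_l (g : nat -> C) (k : nat) :
  cprod1 g (S k) = Cmult (g 1%nat) (cprod1 (fun i => g (S i)) k).
Proof.
  induction k as [|k IH]; [simpl; ring|].
  change (Cmult (cprod1 g (S k)) (g (S (S k)))
          = Cmult (g 1%nat) (Cmult (cprod1 (fun i => g (S i)) k) (g (S (S k))))).
  rewrite IH. ring.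
Qed.

Section NestedConvolution.
Variables (m : nat) (gam : nat -> nat) (f : nat -> arith) (s : C).
Hypothesis Hpos : forall j : nat, (j <= m)%nat -> (0 < gam j)%nat.
Hypothesis Hdiv : forall j : nat, (1 <= j <= m)%nat -> Nat.divide (gam (j - 1)%nat) (gam j).
Hypothesis Hsig :
  forall j : nat, (1 <= j <= m + 1)%nat -> Rbar_lt (sigma_abs (f j)) (Finite (Re s)).

Let L (j : nat) : C := Lval s (restr (gam (j - 1)%nat) (f j)).

Lemma dirichlet_series_convG (r j : nat) : (1 <= j)%nat -> (j + r <= m + 1)%nat ->
  abs_summable (dterm s (restr (gam (j - 1)%nat) (convG gam f r j))) /\
  is_C_lim_seq (sum_n (dterm s (restr (gam (j - 1)%nat) (convG gam f r j))))
       (cprod1 (fun i => L (j - 1 + i)%nat) (S r)).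
Proof.
  revert j. induction r as [|r IH]; intros j Hj Hjr.
  - replace (cprod1 _ 1) with (L j) by (simpl; replace (j - 1 + 1)%nat with j by lia; ring).
    apply dirichlet_series_restr, Hsig. lia.
  - rewrite dterm_restr_convG_S by (first [apply Hdiv | apply Hpos]; lia).
    destruct (IH (S j)) as [Habs Hlim]; [lia | lia |].
    replace (S j - 1)%nat with j in Habs, Hlim by lia.
    destruct (dirichlet_series_restr s (gam (j - 1)%nat) (f j)) as [Habs1 Hlim1];
      [apply Hsig; lia|].
    rewrite cprod1_S_l. replace (j - 1 + 1)%nat with j by lia.
    replace (fun i => L (j - 1 + S i)%nat) with (fun i => L (j + i)%nat)
      by (apply functional_extensionality; intros i; f_equal; lia).
    now apply dconv_abs_summable_lim.
Qed.

End NestedConvolution.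

Theorem proposition2p1 (m : nat) (gam : nat -> nat) (f : nat -> arith) (s : C) :
  (1 <= m)%nat ->
  gam 0%nat = 1%nat ->
  (forall j : nat, (j <= m)%nat -> (0 < gam j)%nat) ->
  (forall j : nat, (1 <= j <= m)%nat -> Nat.divide (gam (j - 1)%nat) (gam j)) ->
  (forall j : nat, (1 <= j <= m + 1)%nat -> Rbar_lt (sigma_abs (f j)) (Finite (Re s))) ->
  Lval s (gconv m gam f) =
  cprod1 (fun j => Lval s (restr (gam (j - 1)%nat) (f j))) (m + 1)%nat.
Proof.
  intros _ Hg0 Hpos Hdiv Hsig.
  destruct (dirichlet_series_convG m gam f s Hpos Hdiv Hsig m 1) as [_ Hlim]; [lia | lia |].
  simpl (1 - 1)%nat in Hlim. rewrite Hg0, dterm_restr_1 in Hlim.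
  rewrite Nat.add_1_r. exact (Lval_of_lim _ _ _ Hlim).
Qed.
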